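(* Let $\mathcal{V}$ be a locally small symmetric monoidal closed category. Then $\mathrm{StrMono}_{\mathcal{V}}\underline{\mathcal{V}}=\mathrm{StrMono}\,\mathcal{V}$.
   Context: $\underline{\mathcal{V}}$ is the self-enrichment of $\mathcal{V}$. For a $\mathcal{V}$-category $\mathbf{A}$: $\mathcal{V}$-monos are morphisms $m$ with every $\mathbf{A}(A,m)$ mono in $\mathcal{V}$, $\mathcal{V}$-epis are $\mathcal{V}$-monos in $\mathbf{A}^{\mathrm{op}}$; $e\downarrow_{\mathcal{V}}m$ for $e:A_1\to A_2$, $m:B_1\to B_2$ means the square formed by $\mathbf{A}(A_2,m)$, $\mathbf{A}(e,B_1)$, $\mathbf{A}(e,B_2)$, $\mathbf{A}(A_1,m)$ is a pullback in $\mathcal{V}$; $\mathcal{E}^{\downarrow_{\mathcal{V}}}$ is the class of $m$ with $e\downarrow_{\mathcal{V}}m$ for all $e\in\mathcal{E}$. $\mathrm{StrMono}_{\mathcal{V}}\mathbf{A}:=(\mathrm{Epi}_{\mathcal{V}}\mathbf{A})^{\downarrow_{\mathcal{V}}}\cap\mathrm{Mono}_{\mathcal{V}}\mathbf{A}$. The ordinary class $\mathrm{StrMono}\,\mathcal{V}=(\mathrm{Epi}\,\mathcal{V})^{\downarrow}\cap\mathrm{Mono}\,\mathcal{V}$ consists of the strong monomorphisms of $\mathcal{V}$ (monos with the unique diagonal fill-in property against all epis). *)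

Set Implicit Arguments.
Unset Strict Implicit.

Record SMCC := {
  ob : Type;
  hom : ob -> ob -> Type;   (* locally small: hom-sets are (small) types *)
  idm : forall (A : ob), hom A A;
  comp : forall {A B C : ob}, hom B C -> hom A B -> hom A C;
  comp_idl : forall A B (f : hom A B), comp (idm B) f = f;
  comp_idr : forall A B (f : hom A B), comp f (idm A) = f;
  comp_assoc : forall A B C D (f : hom A B) (g : hom B C) (h : hom C D),
      comp h (comp g f) = comp (comp h g) f;

  tens : ob -> ob -> ob;
  tensm : forall {A A' B B' : ob}, hom A A' -> hom B B' -> hom (tens A B) (tens A' B');
  tensm_id : forall A B, tensm (idm A) (idm B) = idm (tens A B);
  tensm_comp : forall A A' A'' B B' B'' (f : hom A A') (f' : hom A' A'')
      (g : hom B B') (g' : hom B' B''),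
      tensm (comp f' f) (comp g' g) = comp (tensm f' g') (tensm f g);
  unit : ob;

  assoc : forall A B C, hom (tens (tens A B) C) (tens A (tens B C));
  assoc_inv : forall A B C, hom (tens A (tens B C)) (tens (tens A B) C);
  assoc_iso1 : forall A B C, comp (assoc_inv A B C) (assoc A B C) = idm _;
  assoc_iso2 : forall A B C, comp (assoc A B C) (assoc_inv A B C) = idm _;
  assoc_nat : forall A A' B B' C C' (f : hom A A') (g : hom B B') (h : hom C C'),
      comp (assoc A' B' C') (tensm (tensm f g) h)
      = comp (tensm f (tensm g h)) (assoc A B C);

  lunit : forall A, hom (tens unit A) A;
  lunit_inv : forall A, hom A (tens unit A);
  lunit_iso1 : forall A, comp (lunit_inv A) (lunit A) = idm _;
  lunit_iso2 : forall A, comp (lunit A) (lunit_inv A) = idm _;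
  lunit_nat : forall A A' (f : hom A A'),
      comp (lunit A') (tensm (idm unit) f) = comp f (lunit A);

  runit : forall A, hom (tens A unit) A;
  runit_inv : forall A, hom A (tens A unit);
  runit_iso1 : forall A, comp (runit_inv A) (runit A) = idm _;
  runit_iso2 : forall A, comp (runit A) (runit_inv A) = idm _;
  runit_nat : forall A A' (f : hom A A'),
      comp (runit A') (tensm f (idm unit)) = comp f (runit A);

  pentagon : forall A B C D,
      comp (assoc A B (tens C D)) (assoc (tens A B) C D)
      = comp (tensm (idm A) (assoc B C D))
          (comp (assoc A (tens B C) D) (tensm (assoc A B C) (idm D)));
  triangle : forall A B,
      comp (tensm (idm A) (lunit B)) (assoc A unit B) = tensm (runit A) (idm B);

  braid : forall A B, hom (tens A B) (tens B A);
  braid_nat : forall A A' B B' (f : hom A A') (g : hom B B'),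
      comp (braid A' B') (tensm f g) = comp (tensm g f) (braid A B);
  braid_invol : forall A B, comp (braid B A) (braid A B) = idm (tens A B);
  hexagon : forall A B C,
      comp (assoc B C A) (comp (braid A (tens B C)) (assoc A B C))
      = comp (tensm (idm B) (braid A C))
          (comp (assoc B A C) (tensm (braid A B) (idm C)));

  ihom : ob -> ob -> ob;
  ev : forall A B, hom (tens (ihom A B) A) B;
  curry : forall {X A B : ob}, hom (tens X A) B -> hom X (ihom A B);
  curry_ev : forall X A B (f : hom (tens X A) B),
      comp (ev A B) (tensm (curry f) (idm A)) = f;
  curry_uniq : forall X A B (f : hom (tens X A) B) (g : hom X (ihom A B)),
      comp (ev A B) (tensm g (idm A)) = f -> g = curry f
}.

Arguments hom s _ _ : clear implicits.
Arguments idm {s} A.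
Arguments comp {s A B C} _ _.
Arguments tensm {s A A' B B'} _ _.
Arguments tens {s} _ _.
Arguments ihom {s} _ _.
Arguments ev {s} A B.
Arguments curry {s X A B} _.

Section Defs.
Variable V : SMCC.

Definition Mono {B1 B2 : ob V} (m : hom V B1 B2) : Prop :=
  forall X (f g : hom V X B1), comp m f = comp m g -> f = g.

Definition Epi {A1 A2 : ob V} (e : hom V A1 A2) : Prop :=
  forall Y (f g : hom V A2 Y), comp f e = comp g e -> f = g.

Definition orth {A1 A2 B1 B2 : ob V} (e : hom V A1 A2) (m : hom V B1 B2) : Prop :=
  forall (u : hom V A1 B1) (v : hom V A2 B2), comp m u = comp v e ->
    exists! d : hom V A2 B1, comp d e = u /\ comp m d = v.

Definition StrMono {B1 B2 : ob V} (m : hom V B1 B2) : Prop :=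
  (forall A1 A2 (e : hom V A1 A2), Epi e -> orth e m) /\ Mono m.

Definition is_pullback {P X Y Z : ob V} (p1 : hom V P X) (p2 : hom V P Y)
    (f : hom V X Z) (g : hom V Y Z) : Prop :=
  comp f p1 = comp g p2 /\
  forall Q (q1 : hom V Q X) (q2 : hom V Q Y), comp f q1 = comp g q2 ->
    exists! u : hom V Q P, comp p1 u = q1 /\ comp p2 u = q2.

Definition ihom_r (A : ob V) {B1 B2 : ob V} (m : hom V B1 B2)
  : hom V (ihom A B1) (ihom A B2) :=
  curry (comp m (ev A B1)).
Definition ihom_l {A1 A2 : ob V} (e : hom V A1 A2) (B : ob V)
  : hom V (ihom A2 B) (ihom A1 B) :=
  curry (comp (ev A2 B) (tensm (idm (ihom A2 B)) e)).

Definition VMono {B1 B2 : ob V} (m : hom V B1 B2) : Prop :=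
  forall A, Mono (ihom_r A m).

Definition VEpi {A1 A2 : ob V} (e : hom V A1 A2) : Prop :=
  forall B, Mono (ihom_l e B).

Definition Vorth {A1 A2 B1 B2 : ob V} (e : hom V A1 A2) (m : hom V B1 B2) : Prop :=
  is_pullback (ihom_r A2 m) (ihom_l e B1) (ihom_l e B2) (ihom_r A1 m).

Definition VStrMono {B1 B2 : ob V} (m : hom V B1 B2) : Prop :=
  (forall A1 A2 (e : hom V A1 A2), VEpi e -> Vorth e m) /\ VMono m.

End Defs.

(* Currying identifies a map h : X -> [A, B] with a map X (x) A -> B, and under
   this identification [A, m] and [e, B] act as postcomposition with m and
   precomposition with X (x) e.  Hence m is a V-mono iff it is a mono (test
   against A = I), e is a V-epi iff every X (x) e is an epi, and e ↓_V m holds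
   iff X (x) e ↓ m for every X.  Since X (x) - is a left adjoint (by symmetry,
   it is conjugate to - (x) X) it preserves epis, and X = I recovers e ↓ m, so
   both orthogonality conditions single out the same monomorphisms. *)


Section SelfEnrichment.
Variable V : SMCC.

Definition uncurry {X A B : ob V} (h : hom V X (ihom A B)) : hom V (tens X A) B :=
  comp (ev A B) (tensm h (idm A)).

Lemma uncurry_curry {X A B} (f : hom V (tens X A) B) : uncurry (curry f) = f.
Proof. apply curry_ev. Qed.

Lemma curry_uncurry {X A B} (h : hom V X (ihom A B)) : curry (uncurry h) = h.
Proof. symmetry; apply curry_uniq; reflexivity. Qed.

Lemma curry_inj {X A B} (f g : hom V (tens X A) B) : curry f = curry g -> f = g.
Proof. intros H; rewrite <- (uncurry_curry f), <- (uncurry_curry g), H; reflexivity. Qed.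

Lemma tensm_comp_idr {X Y Z A} (f : hom V Y Z) (g : hom V X Y) :
  tensm (comp f g) (idm A) = comp (tensm f (idm A)) (tensm g (idm A)).
Proof. rewrite <- tensm_comp, comp_idl; reflexivity. Qed.

Lemma curry_nat {X Y A B} (f : hom V (tens X A) B) (k : hom V Y X) :
  comp (curry f) k = curry (comp f (tensm k (idm A))).
Proof.
  apply curry_uniq.
  rewrite tensm_comp_idr, comp_assoc, curry_ev; reflexivity.
Qed.

Lemma ihom_r_curry {X A B1 B2} (m : hom V B1 B2) (f : hom V (tens X A) B1) :
  comp (ihom_r A m) (curry f) = curry (comp m f).
Proof. unfold ihom_r; rewrite curry_nat, <- comp_assoc, curry_ev; reflexivity. Qed.

Lemma ihom_l_curry {X A1 A2 B} (e : hom V A1 A2) (f : hom V (tens X A2) B) :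
  comp (ihom_l e B) (curry f) = curry (comp f (tensm (idm X) e)).
Proof.
  unfold ihom_l; rewrite curry_nat, <- comp_assoc, <- tensm_comp.
  rewrite comp_idl, comp_idr.
  replace (tensm (curry f) e) with (comp (tensm (curry f) (idm A2)) (tensm (idm X) e))
    by (rewrite <- tensm_comp, comp_idl, comp_idr; reflexivity).
  rewrite comp_assoc, curry_ev; reflexivity.
Qed.

Lemma ihom_l_ihom_r {A1 A2 B1 B2} (e : hom V A1 A2) (m : hom V B1 B2) :
  comp (ihom_l e B2) (ihom_r A2 m) = comp (ihom_r A1 m) (ihom_l e B1).
Proof.
  rewrite <- (comp_idr (comp (ihom_l e B2) (ihom_r A2 m))),
    <- (comp_idr (comp (ihom_r A1 m) (ihom_l e B1))),
    <- (curry_uncurry (idm (ihom A2 B1))), <- !comp_assoc.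
  rewrite ihom_r_curry, !ihom_l_curry, ihom_r_curry, comp_assoc; reflexivity.
Qed.

Lemma vmono_iff_mono {B1 B2} (m : hom V B1 B2) : VMono m <-> Mono m.
Proof.
  split.
  - intros Hm Y f g H.
    assert (Hc : comp (ihom_r (unit V) m) (curry (comp f (runit Y)))
               = comp (ihom_r (unit V) m) (curry (comp g (runit Y)))).
    { rewrite !ihom_r_curry, !comp_assoc, H; reflexivity. }
    apply Hm, curry_inj in Hc.
    rewrite <- (comp_idr f), <- (comp_idr g), <- (runit_iso2 Y), !comp_assoc, Hc.
    reflexivity.
  - intros Hm A X h k H.
    rewrite <- (curry_uncurry h), <- (curry_uncurry k), !ihom_r_curry in *.
    apply curry_inj, Hm in H; rewrite H; reflexivity.
Qed.

Lemma vepi_epi_tens {A1 A2} (e : hom V A1 A2) X : VEpi e -> Epi (tensm (idm X) e).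
Proof.
  intros He Y f g H.
  apply curry_inj, (He Y).
  rewrite !ihom_l_curry, H; reflexivity.
Qed.

(* Curry on the other side of the braiding: e is epi against [X, B]. *)
Lemma epi_vepi {A1 A2} (e : hom V A1 A2) : Epi e -> VEpi e.
Proof.
  intros He B X h k H.
  rewrite <- (curry_uncurry h), <- (curry_uncurry k), !ihom_l_curry in *.
  apply curry_inj in H.
  set (f := uncurry h) in *; set (g := uncurry k) in *.
  assert (Hb : curry (comp f (braid A2 X)) = curry (comp g (braid A2 X))).
  { apply He.
    rewrite !curry_nat, <- !comp_assoc, braid_nat, !comp_assoc, H; reflexivity. }
  apply curry_inj in Hb.
  assert (Hfg : f = g).
  { rewrite <- (comp_idr f), <- (comp_idr g), <- (braid_invol X A2), !comp_assoc, Hb.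
    reflexivity. }
  rewrite Hfg; reflexivity.
Qed.

Lemma vorth_iff_orth_tens {A1 A2 B1 B2} (e : hom V A1 A2) (m : hom V B1 B2) :
  Vorth e m <-> forall X, orth (tensm (idm X) e) m.
Proof.
  split.
  - intros [_ Hpb] X u v Huv.
    assert (Hq : comp (ihom_l e B2) (curry v) = comp (ihom_r A1 m) (curry u)).
    { rewrite ihom_l_curry, ihom_r_curry, Huv; reflexivity. }
    destruct (Hpb _ _ _ Hq) as [w [[Hw1 Hw2] Hw]].
    rewrite <- (curry_uncurry w), ihom_r_curry in Hw1.
    rewrite <- (curry_uncurry w), ihom_l_curry in Hw2.
    apply curry_inj in Hw1; apply curry_inj in Hw2.
    exists (uncurry w); split; [split; assumption|].
    intros d [Hd1 Hd2].
    rewrite (Hw (curry d)), uncurry_curry; [reflexivity|].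
    rewrite ihom_r_curry, ihom_l_curry, Hd1, Hd2; split; reflexivity.
  - intros Ho; split; [apply ihom_l_ihom_r|].
    intros Q q1 q2 Hq.
    rewrite <- (curry_uncurry q1), <- (curry_uncurry q2),
      ihom_l_curry, ihom_r_curry in *.
    apply curry_inj in Hq.
    destruct (Ho Q _ _ (eq_sym Hq)) as [d [[Hd1 Hd2] Hd]].
    exists (curry d); split.
    + rewrite ihom_r_curry, ihom_l_curry, Hd1, Hd2; split; reflexivity.
    + intros w [Hw1 Hw2].
      rewrite <- (curry_uncurry w), ihom_r_curry, ihom_l_curry in *.
      apply curry_inj in Hw1; apply curry_inj in Hw2.
      rewrite (Hd (uncurry w)); [reflexivity | split; assumption].
Qed.

Lemma lunit_inv_nat {A A'} (f : hom V A A') :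
  comp (lunit_inv A') f = comp (tensm (idm (unit V)) f) (lunit_inv A).
Proof.
  rewrite <- (comp_idr (comp (lunit_inv A') f)), <- (lunit_iso2 A).
  rewrite !comp_assoc, <- (comp_assoc (lunit A)), <- lunit_nat.
  rewrite !comp_assoc, lunit_iso1, comp_idl; reflexivity.
Qed.

Lemma orth_of_orth_tens_unit {A1 A2 B1 B2} (e : hom V A1 A2) (m : hom V B1 B2) :
  orth (tensm (idm (unit V)) e) m -> orth e m.
Proof.
  intros Ho u v Huv.
  assert (Hs : comp m (comp u (lunit A1))
             = comp (comp v (lunit A2)) (tensm (idm (unit V)) e)).
  { rewrite <- comp_assoc, lunit_nat, !comp_assoc, Huv; reflexivity. }
  destruct (Ho _ _ Hs) as [d [[Hd1 Hd2] Hd]].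
  exists (comp d (lunit_inv A2)); split; [split|].
  - rewrite <- comp_assoc, lunit_inv_nat, comp_assoc, Hd1, <- comp_assoc,
      lunit_iso2, comp_idr; reflexivity.
  - rewrite comp_assoc, Hd2, <- comp_assoc, lunit_iso2, comp_idr; reflexivity.
  - intros d' [H1 H2].
    rewrite (Hd (comp d' (lunit A2))), <- comp_assoc, lunit_iso2, comp_idr;
      [reflexivity | split].
    + rewrite <- comp_assoc, lunit_nat, comp_assoc, H1; reflexivity.
    + rewrite comp_assoc, H2; reflexivity.
Qed.

End SelfEnrichment.

Theorem proposition7p7 (V : SMCC) (B1 B2 : ob V) (m : hom V B1 B2) :
  VStrMono m <-> StrMono m.
Proof.
  split; intros [Ho Hm]; split.
  - intros A1 A2 e He.
    apply orth_of_orth_tens_unit, vorth_iff_orth_tens, Ho, epi_vepi, He.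
  - apply vmono_iff_mono, Hm.
  - intros A1 A2 e He.
    apply vorth_iff_orth_tens; intros X; apply Ho, vepi_epi_tens, He.
  - apply vmono_iff_mono, Hm.
Qed.
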